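(* For each $n=1,\dots,N$: (i) $h_n(y,t)=h_n(2m_n-y,t)$ for all $y,t$ (where defined); in particular $h_n(\overline m_n,\cdot)=h_n(\underline m_n,\cdot)$; (ii) $y\mapsto h_n(y,t)$ is strictly increasing for $y\le\underline m_n$ and strictly decreasing for $y\ge\overline m_n$. Here for $n=1$ (resp. $n=N$), $\underline m_n=\overline m_n=-\infty$ (resp. $+\infty$).
   Context: $N<\infty$. $Z$ under $\overline{\mathbb{P}}$ is the difference of two independent Poisson processes with intensity $\beta>0$ (on $\mathbb{Z}$). $(a_n)_{n=1}^{N+1}$ is strictly increasing in $\mathbb{Z}\cup\{\pm\infty\}$, $a_1=-\infty$, $a_{N+1}=\infty$, $\bigcup_n[a_n,a_{n+1})=\mathbb{Z}\cup\{-\infty\}$, with $m_n=(a_n+a_{n+1}-1)/2\notin\mathbb{Z}$; $\underline m_n=\lfloor m_n\rfloor$, $\overline m_n=\lceil m_n\rceil$. $h_n(y,t)=\overline{\mathbb{P}}(Z_1\in[a_n,a_{n+1})\mid Z_t=y)$ for $y\in\mathbb{Z}$, $t\in[0,1]$. *)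

From Stdlib Require Import Reals ZArith Lia Lra.
From Coquelicot Require Import Coquelicot.
Open Scope R_scope.

Inductive zbar : Type := ZNinf | ZFin (z : Z) | ZPinf.

Definition zlt (u v : zbar) : Prop :=
  match u, v with
  | ZNinf, ZNinf => False
  | ZNinf, _ => True
  | ZFin x, ZFin y => (x < y)%Z
  | ZFin _, ZPinf => True
  | _, _ => False
  end.

Definition zle (u v : zbar) : Prop := zlt u v \/ u = v.

Definition inI (lo hi : zbar) (z : Z) : bool :=
  match lo with ZNinf => true | ZFin x => (x <=? z)%Z | ZPinf => false end &&
  match hi with ZNinf => false | ZFin x => (z <? x)%Z | ZPinf => true end.

Definition sumZ (f : Z -> R) : R :=
  Series (fun k => f (Z.of_nat k)) + Series (fun k => f (- Z.of_nat k - 1)%Z).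

Definition pois (lam : R) (k : Z) : R :=
  if (k <? 0)%Z then 0
  else exp (- lam) * lam ^ (Z.to_nat k) / INR (fact (Z.to_nat k)).

(** Law of Z_s - Z_0: difference of two independent Poisson(beta s) variables,
    P(N1 - N2 = j) = sum_l P(N2 = l) P(N1 = l + j). *)
Definition skellam (beta s : R) (j : Z) : R :=
  Series (fun l => pois (beta * s) (Z.of_nat l) * pois (beta * s) (Z.of_nat l + j)%Z).

(** h_n(y,t) = P(Z_1 ∈ [a_n, a_{n+1}) | Z_t = y)
             = sum_{z ∈ [a_n,a_{n+1})} P(Z_1 - Z_t = z - y)   (Markov, stationary increments). *)
Definition h (beta : R) (a : nat -> zbar) (n : nat) (y : Z) (t : R) : R :=
  sumZ (fun z => if inI (a n) (a (S n)) z
                 then skellam beta (1 - t) (z - y)%Z else 0).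

(** underline m_n = floor m_n and overline m_n = ceil m_n, with m_n = (a_n + a_{n+1} - 1)/2;
    convention: -∞ if a_n = -∞ (n = 1), +∞ if a_{n+1} = +∞ (n = N). *)
Definition m_low (a : nat -> zbar) (n : nat) : zbar :=
  match a n, a (S n) with
  | ZFin x, ZFin y => ZFin ((x + y - 2) / 2)%Z
  | ZNinf, _ => ZNinf
  | _, _ => ZPinf
  end.

Definition m_up (a : nat -> zbar) (n : nat) : zbar :=
  match a n, a (S n) with
  | ZFin x, ZFin y => ZFin ((x + y) / 2)%Z
  | ZNinf, _ => ZNinf
  | _, _ => ZPinf
  end.

(* Z_1 - Z_t is a Skellam variable whose weights g(j) are symmetric and strictly
   decreasing in |j|, and h_n(y,t) is the g-mass of the cell [a_n, a_{n+1}) seen from y.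
   Moving y to y + 1 gains the weight of the point a_n - 1 and loses that of a_{n+1} - 1,
   so the sign of the increment is decided by which end of the cell is closer to y; the
   reflection z |-> a_n + a_{n+1} - 1 - z exchanges the two ends.
   With lam = beta (1 - t), g(j) = e^{-2 lam} B_j(lam) for the modified Bessel series
   B_j(x) = sum_l x^{2l+j} / (l! (l+j)!).  Since B_0' = 2 B_1 and B_{j+1}' = B_j + B_{j+2},
   the Taylor coefficients of e^{2x} (B_j - B_{j+1}) satisfy a recursion with nonnegative
   coefficients; hence they are nonnegative, the coefficient of x^j is positive, and
   g(j+1) < g(j). *)

From Stdlib Require Import Reals ZArith Lia Lra.
From Coquelicot Require Import Coquelicot.
Open Scope R_scope.

Lemma is_series_zero : is_series (fun _ : nat => 0) 0.
Proof.
  eapply filterlim_ext; [|apply filterlim_const].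
  intros n. rewrite sum_n_const. simpl. ring.
Qed.

Lemma ex_series_zero : ex_series (fun _ : nat => 0).
Proof. exists 0. exact is_series_zero. Qed.

Lemma Series_zero : Series (fun _ : nat => 0) = 0.
Proof. exact (is_series_unique _ _ is_series_zero). Qed.

Lemma Series_nonneg (a : nat -> R) : (forall n, 0 <= a n) -> ex_series a -> 0 <= Series a.
Proof.
  intros Ha Ea. rewrite <- Series_zero. apply Series_le; auto.
  intros n. split; [lra | apply Ha].
Qed.

Lemma Series_pos (a : nat -> R) m :
  ex_series a -> (forall n, 0 <= a n) -> 0 < a m -> 0 < Series a.
Proof.
  intros Ea Ha Hm. rewrite (Series_incr_n a (S m)) by (lia || exact Ea). simpl Init.Nat.pred.
  assert (Hsum : a m <= sum_f_R0 a m).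
  { destruct m as [|m]; simpl; [lra|]. pose proof (cond_pos_sum a m Ha). lra. }
  assert (Htail : 0 <= Series (fun k => a (S m + k)%nat)).
  { apply Series_nonneg; [intros; apply Ha | now apply (ex_series_incr_n a (S m))]. }
  lra.
Qed.

Definition summableZ (f : Z -> R) : Prop :=
  ex_series (fun k => f (Z.of_nat k)) /\ ex_series (fun k => f (- Z.of_nat k - 1)%Z).

Lemma summableZ_ext (f g : Z -> R) : (forall z, f z = g z) -> summableZ f -> summableZ g.
Proof.
  intros E [Hp Hn]; split; [revert Hp | revert Hn]; apply ex_series_ext; intros; apply E.
Qed.

Lemma sumZ_ext (f g : Z -> R) : (forall z, f z = g z) -> sumZ f = sumZ g.
Proof. intros E; unfold sumZ. f_equal; apply Series_ext; intros; apply E. Qed.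

Lemma summableZ_zero : summableZ (fun _ => 0).
Proof. split; apply ex_series_zero. Qed.

Lemma sumZ_zero : sumZ (fun _ => 0) = 0.
Proof. unfold sumZ. rewrite Series_zero. ring. Qed.

Lemma sumZ_minus (f g : Z -> R) :
  summableZ f -> summableZ g -> sumZ (fun z => f z - g z) = sumZ f - sumZ g.
Proof. intros [Hf1 Hf2] [Hg1 Hg2]; unfold sumZ. rewrite !Series_minus by auto. ring. Qed.

Lemma summableZ_le (f g : Z -> R) :
  summableZ g -> (forall z, Rabs (f z) <= g z) -> summableZ f.
Proof.
  intros [Hg1 Hg2] Hfg; split; [revert Hg1 | revert Hg2];
    apply (ex_series_le (V := R_CompleteNormedModule)); intros; apply Hfg.
Qed.

Lemma summableZ_succ_shift (f : Z -> R) : summableZ f <-> summableZ (fun z => f (z + 1)%Z).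
Proof.
  unfold summableZ.
  rewrite (ex_series_incr_1 (fun k => f (Z.of_nat k))),
    (ex_series_incr_1 (fun k => f (- Z.of_nat k - 1 + 1)%Z)).
  split; intros [H1 H2]; split; [revert H1 | revert H2 | revert H1 | revert H2];
    apply ex_series_ext; intros n; f_equal; lia.
Qed.

Lemma sumZ_succ_shift (f : Z -> R) : summableZ f -> sumZ (fun z => f (z + 1)%Z) = sumZ f.
Proof.
  intros Hf. pose proof (proj1 (summableZ_succ_shift f) Hf) as [_ Hs2].
  destruct Hf as [Hf1 _]. unfold sumZ.
  rewrite (Series_incr_1 (fun k => f (Z.of_nat k))) by exact Hf1.
  rewrite (Series_incr_1 (fun k => f (- Z.of_nat k - 1 + 1)%Z)) by exact Hs2.
  replace (Series (fun k => f (Z.of_nat (S k))))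
    with (Series (fun k => f (Z.of_nat k + 1)%Z)) by (apply Series_ext; intros; f_equal; lia).
  replace (Series (fun k => f (- Z.of_nat (S k) - 1 + 1)%Z))
    with (Series (fun k => f (- Z.of_nat k - 1)%Z)) by (apply Series_ext; intros; f_equal; lia).
  simpl Z.of_nat. replace (- 0 - 1 + 1)%Z with 0%Z by lia. ring.
Qed.

Lemma sumZ_shift (c : Z) (f : Z -> R) : summableZ f ->
  summableZ (fun z => f (z + c)%Z) /\ sumZ (fun z => f (z + c)%Z) = sumZ f.
Proof.
  revert f. induction c as [|c IH|c IH] using Z.peano_ind; intros f Hf.
  - split; [eapply summableZ_ext; [|exact Hf] | apply sumZ_ext];
      intros; cbv beta; f_equal; lia.
  - destruct (IH f Hf) as [Hc Ec].
    pose proof (proj1 (summableZ_succ_shift _) Hc) as Hc1.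
    split.
    + eapply summableZ_ext; [|exact Hc1]; intros; cbv beta; f_equal; lia.
    + rewrite <- Ec, <- (sumZ_succ_shift _ Hc). apply sumZ_ext; intros; cbv beta; f_equal; lia.
  - destruct (IH f Hf) as [Hc Ec].
    assert (Hp : summableZ (fun z => f (z + Z.pred c)%Z)).
    { apply summableZ_succ_shift. eapply summableZ_ext; [|exact Hc]; intros; cbv beta; f_equal; lia. }
    split; [exact Hp|].
    rewrite <- Ec, <- (sumZ_succ_shift _ Hp). apply sumZ_ext; intros; cbv beta; f_equal; lia.
Qed.

Lemma sumZ_reflect (c : Z) (f : Z -> R) : summableZ f ->
  summableZ (fun z => f (c - z)%Z) /\ sumZ (fun z => f (c - z)%Z) = sumZ f.
Proof.
  intros Hf. destruct (sumZ_shift (c + 1) f Hf) as [[Hs1 Hs2] Es].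
  split; [split|].
  - eapply ex_series_ext; [|exact Hs2]; intros; cbv beta; f_equal; lia.
  - eapply ex_series_ext; [|exact Hs1]; intros; cbv beta; f_equal; lia.
  - rewrite <- Es. unfold sumZ. rewrite Rplus_comm.
    f_equal; apply Series_ext; intros; f_equal; lia.
Qed.

Lemma summableZ_point0 (v : R) : summableZ (fun z => if (z =? 0)%Z then v else 0).
Proof.
  split; [apply ex_series_incr_1|];
    apply (ex_series_ext (fun _ => 0)); try apply ex_series_zero;
    intros n; rewrite (proj2 (Z.eqb_neq _ _)) by lia; reflexivity.
Qed.

Lemma sumZ_point0 (v : R) : sumZ (fun z => if (z =? 0)%Z then v else 0) = v.
Proof.
  unfold sumZ. rewrite Series_incr_1 by apply (proj1 (summableZ_point0 v)).
  replace (Series (fun k => if (Z.of_nat (S k) =? 0)%Z then v else 0)) with (Series (fun _ : nat => 0))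
    by (apply Series_ext; intros n; rewrite (proj2 (Z.eqb_neq _ _)) by lia; reflexivity).
  replace (Series (fun k => if (- Z.of_nat k - 1 =? 0)%Z then v else 0)) with (Series (fun _ : nat => 0))
    by (apply Series_ext; intros n; rewrite (proj2 (Z.eqb_neq _ _)) by lia; reflexivity).
  rewrite Series_zero. simpl. ring.
Qed.

Lemma summableZ_point (c : Z) (f : Z -> R) : summableZ (fun z => if (z =? c)%Z then f z else 0).
Proof.
  destruct (sumZ_shift (- c) _ (summableZ_point0 (f c))) as [Hs _].
  eapply summableZ_ext; [|exact Hs].
  intros z; cbv beta. destruct (Z.eqb_spec (z + - c) 0), (Z.eqb_spec z c); subst; lia || reflexivity.
Qed.

Lemma sumZ_point (c : Z) (f : Z -> R) : sumZ (fun z => if (z =? c)%Z then f z else 0) = f c.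
Proof.
  set (p := fun z => if (z =? c)%Z then f z else 0).
  rewrite <- (proj2 (sumZ_shift c p (summableZ_point c f))), <- (sumZ_point0 (f c)).
  apply sumZ_ext. intros z; unfold p.
  destruct (Z.eqb_spec (z + c) c), (Z.eqb_spec z 0); subst; f_equal; lia || reflexivity.
Qed.

Lemma lt_of_succ_lt (H : Z -> R) (y1 y2 : Z) : (y1 < y2)%Z ->
  (forall w, (y1 <= w < y2)%Z -> H w < H (w + 1)%Z) -> H y1 < H y2.
Proof.
  intros H12. pattern y2. revert y2 H12. apply Z.lt_ind.
  - intros u v ->. reflexivity.
  - intros Hstep. apply Hstep. lia.
  - intros y2 H12 IH Hstep. apply Rlt_trans with (H y2).
    + apply IH. intros w Hw. apply Hstep. lia.
    + apply Hstep. lia.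
Qed.

Definition poisson_pmf (lam : R) (l : nat) : R := exp (- lam) * lam ^ l / INR (fact l).

Lemma pois_of_nat (lam : R) (l : nat) : pois lam (Z.of_nat l) = poisson_pmf lam l.
Proof.
  unfold pois, poisson_pmf. rewrite (proj2 (Z.ltb_ge _ _)) by lia. now rewrite Nat2Z.id.
Qed.

Lemma pois_neg (lam : R) (k : Z) : (k < 0)%Z -> pois lam k = 0.
Proof. intros Hk; unfold pois. now rewrite (proj2 (Z.ltb_lt _ _) Hk). Qed.

Lemma inv_fact_pos (n : nat) : 0 < / INR (fact n).
Proof. apply Rinv_0_lt_compat, INR_fact_lt_0. Qed.

Lemma pow_div_fact_nonneg (x : R) (n : nat) : 0 <= x -> 0 <= x ^ n / INR (fact n).
Proof. intros Hx. apply Rmult_le_pos; [now apply pow_le | left; apply inv_fact_pos]. Qed.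

Lemma pow_div_fact_le_exp (x : R) (n : nat) : 0 <= x -> x ^ n / INR (fact n) <= exp x.
Proof.
  intros Hx. apply Rle_trans with (2 := exp_ge_taylor x n Hx).
  destruct n as [|n]; [apply Rle_refl|]. rewrite tech5.
  pose proof (cond_pos_sum (fun k => x ^ k / INR (fact k)) n
    (fun k => pow_div_fact_nonneg x k Hx)). lra.
Qed.

Lemma ex_series_pow_div_fact (x : R) : ex_series (fun n => x ^ n / INR (fact n)).
Proof.
  exists (exp x). apply (is_series_ext (fun n => / INR (fact n) * x ^ n)).
  - intros n. apply Rmult_comm.
  - exact (proj1 (is_pseries_R _ _ _) (is_exp_Reals _)).
Qed.

Lemma poisson_pmf_nonneg (lam : R) (l : nat) : 0 <= lam -> 0 <= poisson_pmf lam l.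
Proof.
  intros Hlam. unfold poisson_pmf, Rdiv. rewrite Rmult_assoc.
  apply Rmult_le_pos; [left; apply exp_pos | now apply pow_div_fact_nonneg].
Qed.

Lemma poisson_pmf_le_1 (lam : R) (l : nat) : 0 <= lam -> poisson_pmf lam l <= 1.
Proof.
  intros Hlam. unfold poisson_pmf, Rdiv. rewrite Rmult_assoc, exp_Ropp.
  pose proof (pow_div_fact_le_exp lam l Hlam). pose proof (exp_pos lam).
  apply (Rmult_le_reg_l (exp lam)); auto.
  rewrite <- Rmult_assoc, Rinv_r by lra. unfold Rdiv in *. lra.
Qed.

Lemma ex_series_poisson_pmf (lam : R) : ex_series (poisson_pmf lam).
Proof.
  apply (ex_series_ext (fun n => lam ^ n / INR (fact n) * exp (- lam))).
  - intros n. change (lam ^ n / INR (fact n) * exp (- lam) = poisson_pmf lam n).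
    unfold poisson_pmf, Rdiv. ring.
  - apply ex_series_scal_r, ex_series_pow_div_fact.
Qed.

Lemma pois_nonneg (lam : R) (k : Z) : 0 <= lam -> 0 <= pois lam k.
Proof.
  intros Hlam. destruct (Z_lt_le_dec k 0).
  - rewrite pois_neg by lia. lra.
  - rewrite <- (Z2Nat.id k), pois_of_nat by lia. now apply poisson_pmf_nonneg.
Qed.

Lemma pois_le_1 (lam : R) (k : Z) : 0 <= lam -> pois lam k <= 1.
Proof.
  intros Hlam. destruct (Z_lt_le_dec k 0).
  - rewrite pois_neg by lia. lra.
  - rewrite <- (Z2Nat.id k), pois_of_nat by lia. now apply poisson_pmf_le_1.
Qed.

Lemma ex_series_skellam_summand (lam : R) (j : Z) : 0 <= lam ->
  ex_series (fun l => pois lam (Z.of_nat l) * pois lam (Z.of_nat l + j)).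
Proof.
  intros Hlam. apply (ex_series_le (V := R_CompleteNormedModule) _ (poisson_pmf lam));
    [|apply ex_series_poisson_pmf].
  intros l. rewrite pois_of_nat.
  pose proof (poisson_pmf_nonneg lam l Hlam).
  pose proof (pois_nonneg lam (Z.of_nat l + j) Hlam). pose proof (pois_le_1 lam (Z.of_nat l + j) Hlam).
  change norm with Rabs. rewrite Rabs_pos_eq by (apply Rmult_le_pos; auto).
  rewrite <- (Rmult_1_r (poisson_pmf lam l)) at 2. apply Rmult_le_compat_l; auto.
Qed.

Lemma skellam_of_nat (b s : R) (j : nat) :
  skellam b s (Z.of_nat j) = Series (fun l => poisson_pmf (b * s) l * poisson_pmf (b * s) (l + j)).
Proof.
  unfold skellam. apply Series_ext. intros l. now rewrite <- Nat2Z.inj_add, !pois_of_nat.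
Qed.

Lemma skellam_opp_of_nat (b s : R) (j : nat) : skellam b s (- Z.of_nat j) = skellam b s (Z.of_nat j).
Proof.
  rewrite skellam_of_nat. unfold skellam. rewrite (Series_incr_n_aux _ j).
  - apply Series_ext. intros l.
    replace (Z.of_nat (j + l) + - Z.of_nat j)%Z with (Z.of_nat l) by lia.
    rewrite !pois_of_nat, Nat.add_comm. ring.
  - intros l Hl. rewrite (pois_neg _ (Z.of_nat l + - Z.of_nat j)) by lia. ring.
Qed.

Lemma skellam_opp (b s : R) (z : Z) : skellam b s (- z) = skellam b s z.
Proof.
  destruct (Z_le_gt_dec 0 z).
  - rewrite <- (Z2Nat.id z) by lia. apply skellam_opp_of_nat.
  - replace z with (- Z.of_nat (Z.to_nat (- z)))%Z by lia.
    rewrite Z.opp_involutive. symmetry. apply skellam_opp_of_nat.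
Qed.

Lemma skellam_nonneg (b s : R) (z : Z) : 0 <= b * s -> 0 <= skellam b s z.
Proof.
  intros Hbs. apply Series_nonneg; [|now apply ex_series_skellam_summand].
  intros l. apply Rmult_le_pos; now apply pois_nonneg.
Qed.

Lemma fact_mul_le (l j : nat) : (fact l * fact j <= fact (l + j))%nat.
Proof.
  induction j as [|j IH].
  - rewrite Nat.add_0_r. simpl. lia.
  - rewrite Nat.add_succ_r. change (fact (S j)) with (S j * fact j)%nat.
    change (fact (S (l + j))) with (S (l + j) * fact (l + j))%nat. nia.
Qed.

Lemma poisson_pmf_add_le (lam : R) (l j : nat) : 0 <= lam ->
  poisson_pmf lam (l + j) <= poisson_pmf lam l * (lam ^ j / INR (fact j)).
Proof.
  intros Hlam. unfold poisson_pmf, Rdiv. rewrite pow_add.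
  assert (Hfact : / INR (fact (l + j)) <= / INR (fact l) * / INR (fact j)).
  { rewrite <- Rinv_mult, <- mult_INR.
    apply Rinv_le_contravar; [rewrite mult_INR; apply Rmult_lt_0_compat; apply INR_fact_lt_0|].
    apply le_INR, fact_mul_le. }
  pose proof (exp_pos (- lam)). pose proof (pow_le lam l Hlam). pose proof (pow_le lam j Hlam).
  replace (exp (- lam) * (lam ^ l * lam ^ j) * / INR (fact (l + j)))
    with ((exp (- lam) * lam ^ l * lam ^ j) * / INR (fact (l + j))) by ring.
  replace (exp (- lam) * lam ^ l * / INR (fact l) * (lam ^ j * / INR (fact j)))
    with ((exp (- lam) * lam ^ l * lam ^ j) * (/ INR (fact l) * / INR (fact j))) by ring.
  apply Rmult_le_compat_l; [|exact Hfact]. apply Rmult_le_pos; [|lra]. apply Rmult_le_pos; lra.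
Qed.

Lemma skellam_le_center (b s : R) (j : nat) : 0 <= b * s ->
  skellam b s (Z.of_nat j) <= ((b * s) ^ j / INR (fact j)) * skellam b s 0.
Proof.
  intros Hbs. change 0%Z with (Z.of_nat 0). rewrite !skellam_of_nat.
  rewrite (Rmult_comm ((b * s) ^ j / INR (fact j))), <- Series_scal_r. apply Series_le.
  - intros l. split; [apply Rmult_le_pos; now apply poisson_pmf_nonneg|].
    rewrite Nat.add_0_r, Rmult_assoc.
    apply Rmult_le_compat_l; [now apply poisson_pmf_nonneg | now apply poisson_pmf_add_le].
  - apply ex_series_scal_r.
    apply (ex_series_ext (fun l => pois (b * s) (Z.of_nat l) * pois (b * s) (Z.of_nat l + 0))).
    + intros l. now rewrite Z.add_0_r, Nat.add_0_r, pois_of_nat.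
    + now apply ex_series_skellam_summand.
Qed.

Lemma summableZ_skellam (b s : R) : 0 <= b * s -> summableZ (skellam b s).
Proof.
  intros Hbs.
  assert (Hpos : ex_series (fun k => skellam b s (Z.of_nat k))).
  { apply (ex_series_le (V := R_CompleteNormedModule) _
      (fun j => ((b * s) ^ j / INR (fact j)) * skellam b s 0)).
    - intros j. change norm with Rabs.
      rewrite Rabs_pos_eq by now apply skellam_nonneg. now apply skellam_le_center.
    - apply ex_series_scal_r, ex_series_pow_div_fact. }
  split; [exact Hpos|].
  apply ex_series_incr_1 in Hpos. revert Hpos. apply ex_series_ext.
  intros k. rewrite <- skellam_opp. f_equal. lia.
Qed.

(* [bessel_coef j] lists the Taylor coefficients of B_j, and [product_coef _ j] those
   of e^{2x} B_j(x). *)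
Definition bessel_even_coef (j m : nat) : R :=
  if Nat.even m then / (INR (fact (Nat.div2 m)) * INR (fact (Nat.div2 m + j))) else 0.

Definition bessel_coef (j : nat) : nat -> R := PS_incr_n (bessel_even_coef j) j.

Definition exp2_coef (k : nat) : R := 2 ^ k / INR (fact k).

Definition product_coef (n j : nat) : R :=
  sum_f_R0 (fun k => exp2_coef k * bessel_coef j (n - k)) n.

Definition product_coef_gap (n j : nat) : R := product_coef n j - product_coef n (S j).

Lemma bessel_coef_on (j l : nat) :
  bessel_coef j (j + 2 * l) = / (INR (fact l) * INR (fact (l + j))).
Proof.
  unfold bessel_coef. rewrite PS_incr_n_simplify. destruct le_lt_dec; [|lia].
  replace (j + 2 * l - j)%nat with (2 * l)%nat by lia.
  unfold bessel_even_coef. now rewrite Nat.even_even, Nat.div2_double.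
Qed.

Lemma bessel_coef_off (j m : nat) : (forall l, m <> (j + 2 * l)%nat) -> bessel_coef j m = 0.
Proof.
  intros Hm. unfold bessel_coef. rewrite PS_incr_n_simplify. destruct le_lt_dec; [|reflexivity].
  unfold bessel_even_coef. destruct (Nat.even (m - j)) eqn:He; [|reflexivity].
  apply Nat.even_spec in He. destruct He as [k Hk]. exfalso; apply (Hm k); lia.
Qed.

Lemma bessel_coef_cases (j m : nat) :
  (exists l, m = (j + 2 * l)%nat) \/ (forall l, m <> (j + 2 * l)%nat).
Proof.
  destruct (le_lt_dec j m) as [Hjm|Hjm].
  - destruct (Nat.Even_or_Odd (m - j)) as [[l Hl]|[l Hl]].
    + left; exists l; lia.
    + right; intros; lia.
  - right; intros; lia.
Qed.

Lemma bessel_coef_nonneg (j m : nat) : 0 <= bessel_coef j m.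
Proof.
  destruct (bessel_coef_cases j m) as [[l ->]|Hm].
  - rewrite bessel_coef_on. left. apply Rinv_0_lt_compat, Rmult_lt_0_compat; apply INR_fact_lt_0.
  - rewrite bessel_coef_off by exact Hm. lra.
Qed.

Lemma INR_fact_S (n : nat) : INR (fact (S n)) = INR (S n) * INR (fact n).
Proof. apply mult_INR. Qed.

Lemma bessel_coef_deriv0 (m : nat) : INR (S m) * bessel_coef 0 (S m) = 2 * bessel_coef 1 m.
Proof.
  destruct (bessel_coef_cases 0 (S m)) as [[[|l] Hl]|Hm]; [lia| |].
  - assert (Hm : m = (1 + 2 * l)%nat) by lia. rewrite Hl, Hm, !bessel_coef_on, !Nat.add_0_r.
    replace (l + 1)%nat with (S l) by lia.
    replace (INR (0 + 2 * S l)) with (2 * INR (S l)) by (rewrite plus_INR, mult_INR; simpl; ring).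
    rewrite INR_fact_S, S_INR. pose proof (INR_fact_lt_0 l). pose proof (pos_INR l). field. lra.
  - rewrite !bessel_coef_off; [lra| |exact Hm]. intros l Hl. apply (Hm (S l)). lia.
Qed.

Lemma bessel_coef_deriv (j m : nat) :
  INR (S m) * bessel_coef (S j) (S m) = bessel_coef (S (S j)) m + bessel_coef j m.
Proof.
  destruct (bessel_coef_cases (S j) (S m)) as [[l Hl]|Hm].
  - assert (Hm : m = (j + 2 * l)%nat) by lia. rewrite Hl, Hm, !bessel_coef_on.
    destruct l as [|l].
    + rewrite (bessel_coef_off (S (S j))) by (intros; lia).
      rewrite !Nat.add_0_l, !Nat.add_0_r, INR_fact_S. simpl (INR (fact 0)).
      pose proof (INR_fact_lt_0 j). pose proof (pos_INR j). rewrite S_INR. field. lra.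
    + replace (j + 2 * S l)%nat with (S (S j) + 2 * l)%nat by lia. rewrite bessel_coef_on.
      replace (l + S (S j))%nat with (S (S l + j)) by lia.
      replace (S l + S j)%nat with (S (S l + j)) by lia.
      rewrite !INR_fact_S.
      replace (INR (S j + 2 * S l)) with (INR (S l) + INR (S (S l + j)))
        by (rewrite <- plus_INR; f_equal; lia).
      pose proof (INR_fact_lt_0 l). pose proof (INR_fact_lt_0 (S l + j)).
      pose proof (pos_INR l). pose proof (pos_INR (S l + j)).
      rewrite !S_INR. field. repeat split; lra.
  - rewrite !bessel_coef_off; [lra| | |exact Hm].
    + intros l Hl. apply (Hm l). lia.
    + intros l Hl. apply (Hm (S l)). lia.
Qed.

Lemma exp2_coef_deriv (k : nat) : INR (S k) * exp2_coef (S k) = 2 * exp2_coef k.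
Proof.
  unfold exp2_coef. rewrite INR_fact_S. simpl (2 ^ S k).
  pose proof (INR_fact_lt_0 k). pose proof (pos_INR k). rewrite S_INR. field. lra.
Qed.

(* Coefficientwise Leibniz rule for the derivative of [e^{2x} b(x)]. *)
Lemma exp2_product_deriv (b : nat -> R) (n : nat) :
  INR (S n) * sum_f_R0 (fun k => exp2_coef k * b (S n - k)%nat) (S n) =
  2 * sum_f_R0 (fun k => exp2_coef k * b (n - k)%nat) n +
  sum_f_R0 (fun k => exp2_coef k * (INR (S (n - k)) * b (S (n - k)))) n.
Proof.
  rewrite scal_sum.
  rewrite (sum_eq _ (fun k => INR k * exp2_coef k * b (S n - k)%nat
                             + INR (S n - k) * exp2_coef k * b (S n - k)%nat)).
  2:{ intros k Hk. replace (INR (S n)) with (INR k + INR (S n - k))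
        by (rewrite <- plus_INR; f_equal; lia). ring. }
  rewrite plus_sum. f_equal.
  - rewrite decomp_sum by lia. simpl Init.Nat.pred. rewrite scal_sum.
    replace (INR 0 * exp2_coef 0 * b (S n - 0)%nat) with 0 by (simpl; ring). rewrite Rplus_0_l.
    apply sum_eq. intros k Hk. replace (S n - S k)%nat with (n - k)%nat by lia.
    rewrite exp2_coef_deriv. ring.
  - rewrite tech5. replace (S n - S n)%nat with 0%nat by lia. simpl (INR 0).
    rewrite !Rmult_0_l, Rplus_0_r.
    apply sum_eq. intros k Hk. replace (S n - k)%nat with (S (n - k)) by lia. ring.
Qed.

Lemma product_coef_deriv (j n : nat) :
  INR (S n) * product_coef (S n) (S j) =
  2 * product_coef n (S j) + product_coef n (S (S j)) + product_coef n j.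
Proof.
  unfold product_coef. rewrite exp2_product_deriv, Rplus_assoc. f_equal.
  rewrite <- plus_sum. apply sum_eq. intros k Hk. rewrite bessel_coef_deriv. ring.
Qed.

Lemma product_coef_deriv0 (n : nat) :
  INR (S n) * product_coef (S n) 0 = 2 * product_coef n 0 + 2 * product_coef n 1.
Proof.
  unfold product_coef. rewrite exp2_product_deriv. f_equal.
  rewrite scal_sum. apply sum_eq. intros k Hk. rewrite bessel_coef_deriv0. ring.
Qed.

Lemma product_coef_gap_succ (n j : nat) :
  product_coef_gap (S n) (S j) =
  (2 * product_coef_gap n (S j) + product_coef_gap n j + product_coef_gap n (S (S j))) / INR (S n).
Proof.
  unfold product_coef_gap. pose proof (product_coef_deriv j n). pose proof (product_coef_deriv (S j) n).
  pose proof (pos_INR n). rewrite S_INR in *. field_simplify_eq; lra.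
Qed.

Lemma product_coef_gap_succ0 (n : nat) :
  product_coef_gap (S n) 0 = (product_coef_gap n 0 + product_coef_gap n 1) / INR (S n).
Proof.
  unfold product_coef_gap. pose proof (product_coef_deriv0 n). pose proof (product_coef_deriv 0 n).
  pose proof (pos_INR n). rewrite S_INR in *. field_simplify_eq; lra.
Qed.

Lemma product_coef_gap_nonneg (n j : nat) : 0 <= product_coef_gap n j.
Proof.
  revert j. induction n as [|n IH]; intros j.
  - unfold product_coef_gap, product_coef, exp2_coef. simpl.
    rewrite (bessel_coef_off (S j) 0) by (intros; lia).
    pose proof (bessel_coef_nonneg j 0). lra.
  - assert (Hn : 0 < / INR (S n)) by (apply Rinv_0_lt_compat, lt_0_INR; lia).
    destruct j as [|j]; [rewrite product_coef_gap_succ0 | rewrite product_coef_gap_succ];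
      apply Rmult_le_pos; try lra.
    + pose proof (IH 0%nat). pose proof (IH 1%nat). lra.
    + pose proof (IH j). pose proof (IH (S j)). pose proof (IH (S (S j))). lra.
Qed.

Lemma product_coef_gap_diag_pos (n : nat) : 0 < product_coef_gap n n.
Proof.
  induction n as [|n IH].
  - unfold product_coef_gap, product_coef, exp2_coef. simpl.
    rewrite (bessel_coef_off 1 0) by (intros; lia).
    pose proof (bessel_coef_on 0 0) as E. simpl in E. rewrite E. lra.
  - rewrite product_coef_gap_succ.
    pose proof (product_coef_gap_nonneg n (S n)). pose proof (product_coef_gap_nonneg n (S (S n))).
    apply Rmult_lt_0_compat; [lra|]. apply Rinv_0_lt_compat, lt_0_INR. lia.
Qed.

Lemma ex_pseries_bessel_even (j : nat) (x : R) :
  ex_pseries (fun n => bessel_even_coef j (2 * n)) (x ^ 2).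
Proof.
  apply (proj2 (ex_pseries_R _ _)).
  apply (ex_series_le (V := R_CompleteNormedModule) _ (fun n => (x ^ 2) ^ n / INR (fact n)));
    [|apply ex_series_pow_div_fact].
  intros n. change norm with Rabs.
  unfold bessel_even_coef. rewrite Nat.even_even, Nat.div2_double, Rinv_mult.
  assert (Hx : 0 <= (x ^ 2) ^ n) by (apply pow_le; nra).
  assert (Hj : / INR (fact (n + j)) <= 1).
  { rewrite <- Rinv_1. apply Rinv_le_contravar; [lra|].
    apply (le_INR 1), lt_O_fact. }
  pose proof (inv_fact_pos n). pose proof (inv_fact_pos (n + j)).
  rewrite Rabs_pos_eq by (apply Rmult_le_pos; [apply Rmult_le_pos|]; lra).
  unfold Rdiv. rewrite (Rmult_comm ((x ^ 2) ^ n)).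
  apply Rmult_le_compat_r; [lra|]. rewrite <- (Rmult_1_r (/ INR (fact n))) at 2.
  apply Rmult_le_compat_l; lra.
Qed.

Lemma bessel_even_coef_odd (j n : nat) : bessel_even_coef j (2 * n + 1) = 0.
Proof. unfold bessel_even_coef. now rewrite Nat.even_odd. Qed.

Lemma ex_pseries_bessel_odd (j : nat) (x : R) :
  ex_pseries (fun n => bessel_even_coef j (2 * n + 1)) (x ^ 2).
Proof.
  apply (proj2 (ex_pseries_R _ _)). apply (ex_series_ext (fun _ => 0)); [|exact ex_series_zero].
  intros n. rewrite bessel_even_coef_odd. symmetry. apply Rmult_0_l.
Qed.

Lemma ex_series_bessel_coef (j : nat) (x : R) : ex_series (fun n => bessel_coef j n * x ^ n).
Proof.
  apply (proj1 (ex_pseries_R _ _)). apply ex_pseries_incr_n.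
  apply ex_pseries_odd_even; [apply ex_pseries_bessel_even | apply ex_pseries_bessel_odd].
Qed.

Lemma PSeries_bessel_coef (j : nat) (x : R) : PSeries (bessel_coef j) x =
  x ^ j * Series (fun l => / (INR (fact l) * INR (fact (l + j))) * (x ^ 2) ^ l).
Proof.
  unfold bessel_coef. rewrite PSeries_incr_n. f_equal.
  rewrite (PSeries_odd_even _ _ (ex_pseries_bessel_even j x) (ex_pseries_bessel_odd j x)).
  replace (PSeries (fun n => bessel_even_coef j (2 * n + 1)) (x ^ 2)) with 0.
  - rewrite Rmult_0_r, Rplus_0_r. apply Series_ext. intros l.
    unfold bessel_even_coef. now rewrite Nat.even_even, Nat.div2_double.
  - rewrite <- Series_zero. apply Series_ext. intros n. rewrite bessel_even_coef_odd. ring.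
Qed.

Lemma skellam_as_PSeries (b s : R) (j : nat) :
  skellam b s (Z.of_nat j) = exp (- (b * s)) * exp (- (b * s)) * PSeries (bessel_coef j) (b * s).
Proof.
  rewrite skellam_of_nat, PSeries_bessel_coef. set (lam := b * s).
  rewrite <- Rmult_assoc, <- Series_scal_l. apply Series_ext. intros l.
  unfold poisson_pmf. rewrite pow_add.
  replace ((lam ^ 2) ^ l) with (lam ^ l * lam ^ l) by (rewrite <- Rpow_mult_distr; f_equal; ring).
  pose proof (INR_fact_lt_0 l). pose proof (INR_fact_lt_0 (l + j)). field. lra.
Qed.

Lemma is_series_exp2_coef (x : R) : is_series (fun n => exp2_coef n * x ^ n) (exp (2 * x)).
Proof.
  apply (is_series_ext (fun n => / INR (fact n) * (2 * x) ^ n)).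
  - intros n. change (/ INR (fact n) * (2 * x) ^ n = exp2_coef n * x ^ n).
    unfold exp2_coef, Rdiv. rewrite Rpow_mult_distr. ring.
  - exact (proj1 (is_pseries_R _ _ _) (is_exp_Reals _)).
Qed.

Lemma is_series_product_coef (j : nat) (x : R) : 0 <= x ->
  is_series (fun n => product_coef n j * x ^ n) (exp (2 * x) * PSeries (bessel_coef j) x).
Proof.
  intros Hx.
  apply (is_series_ext (fun n => sum_f_R0 (fun k => (exp2_coef k * x ^ k)
                                   * (bessel_coef j (n - k) * x ^ (n - k))) n)).
  - intros n. change (sum_f_R0 (fun k => (exp2_coef k * x ^ k)
                        * (bessel_coef j (n - k) * x ^ (n - k))) n = product_coef n j * x ^ n).
    unfold product_coef. rewrite Rmult_comm, scal_sum. apply sum_eq. intros k Hk.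
    replace (x ^ n) with (x ^ k * x ^ (n - k)) by (rewrite <- pow_add; f_equal; lia). ring.
  - apply (is_series_mult_pos (fun k => exp2_coef k * x ^ k) (fun k => bessel_coef j k * x ^ k)).
    + apply is_series_exp2_coef.
    + apply Series_correct, ex_series_bessel_coef.
    + intros n. apply Rmult_le_pos; [apply pow_div_fact_nonneg; lra | now apply pow_le].
    + intros n. apply Rmult_le_pos; [apply bessel_coef_nonneg | now apply pow_le].
Qed.

Lemma PSeries_bessel_coef_succ_lt (j : nat) (x : R) : 0 < x ->
  PSeries (bessel_coef (S j)) x < PSeries (bessel_coef j) x.
Proof.
  intros Hx.
  assert (Hgap : is_series (fun n => product_coef_gap n j * x ^ n)
    (exp (2 * x) * PSeries (bessel_coef j) x - exp (2 * x) * PSeries (bessel_coef (S j)) x)).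
  { apply (is_series_ext _ _ _ (fun n => eq_sym (Rmult_minus_distr_r _ _ _))).
    apply (is_series_minus (V := R_NormedModule)); apply is_series_product_coef; lra. }
  assert (Hpos : 0 < Series (fun n => product_coef_gap n j * x ^ n)).
  { apply (Series_pos _ j); [eexists; exact Hgap| |].
    - intros n. apply Rmult_le_pos; [apply product_coef_gap_nonneg | apply pow_le; lra].
    - apply Rmult_lt_0_compat; [apply product_coef_gap_diag_pos | now apply pow_lt]. }
  rewrite (is_series_unique _ _ Hgap) in Hpos.
  pose proof (exp_pos (2 * x)). nra.
Qed.

Lemma skellam_succ_lt (b s : R) (j : nat) : 0 < b * s ->
  skellam b s (Z.of_nat (S j)) < skellam b s (Z.of_nat j).
Proof.
  intros Hbs. rewrite !skellam_as_PSeries. pose proof (exp_pos (- (b * s))).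
  apply Rmult_lt_compat_l; [nra|]. now apply PSeries_bessel_coef_succ_lt.
Qed.

Lemma skellam_abs (b s : R) (z : Z) : skellam b s (Z.abs z) = skellam b s z.
Proof.
  destruct (Z_le_gt_dec 0 z).
  - now rewrite Z.abs_eq.
  - rewrite Z.abs_neq by lia. apply skellam_opp.
Qed.

Lemma skellam_lt_of_abs_lt (b s : R) (u v : Z) : 0 < b * s ->
  (Z.abs u < Z.abs v)%Z -> skellam b s v < skellam b s u.
Proof.
  intros Hbs Huv. rewrite <- (skellam_abs b s u), <- (skellam_abs b s v).
  apply Ropp_lt_cancel. apply (lt_of_succ_lt (fun w => - skellam b s w)); [exact Huv|].
  intros w Hw. apply Ropp_lt_contravar.
  replace w with (Z.of_nat (Z.to_nat w)) by lia.
  replace (Z.of_nat (Z.to_nat w) + 1)%Z with (Z.of_nat (S (Z.to_nat w))) by lia.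
  now apply skellam_succ_lt.
Qed.

Definition boundary_point (b : zbar) (z : Z) : bool :=
  match b with ZFin x => (z =? x - 1)%Z | _ => false end.

Lemma inI_succ_sub (lo hi : zbar) (z : Z) (v : R) : zlt lo hi ->
  (if inI lo hi (z + 1) then v else 0) - (if inI lo hi z then v else 0) =
  (if boundary_point lo z then v else 0) - (if boundary_point hi z then v else 0).
Proof.
  intros Hlt. unfold inI, boundary_point.
  destruct lo as [|x|], hi as [|y|]; simpl in Hlt |- *; try contradiction;
    repeat match goal with
           | |- context [(?p <=? ?q)%Z] => destruct (Z.leb_spec p q)
           | |- context [(?p <? ?q)%Z] => destruct (Z.ltb_spec p q)
           | |- context [(?p =? ?q)%Z] => destruct (Z.eqb_spec p q)
           end; simpl; try lia; ring.
Qed.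

Lemma zle_ZFin (u v : Z) : zle (ZFin u) (ZFin v) -> (u <= v)%Z.
Proof. intros [Huv|Huv]; [simpl in Huv; lia | injection Huv; lia]. Qed.

Lemma double_le_of_le_div2 (y c : Z) : (y <= c / 2)%Z -> (2 * y <= c)%Z.
Proof. pose proof (Z.div_mod c 2). pose proof (Z.mod_pos_bound c 2). lia. Qed.

Lemma le_double_succ_of_div2_le (y c : Z) : (c / 2 <= y)%Z -> (c <= 2 * y + 1)%Z.
Proof. pose proof (Z.div_mod c 2). pose proof (Z.mod_pos_bound c 2). lia. Qed.

Section IntervalMass.

Variable g : Z -> R.
Hypothesis g_summable : summableZ g.
Hypothesis g_nonneg : forall z, 0 <= g z.

Definition interval_mass (lo hi : zbar) (y : Z) : R :=
  sumZ (fun z => if inI lo hi z then g (z - y) else 0).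

Definition boundary_weight (b : zbar) (y : Z) : R :=
  match b with ZFin x => g (x - 1 - y) | _ => 0 end.

Lemma summableZ_interval_mass (lo hi : zbar) (y : Z) :
  summableZ (fun z => if inI lo hi z then g (z - y) else 0).
Proof.
  apply (summableZ_le _ _ (proj1 (sumZ_shift (- y) g g_summable))).
  intros z. destruct (inI lo hi z).
  - rewrite Rabs_pos_eq by apply g_nonneg. apply Rle_refl.
  - rewrite Rabs_R0. apply g_nonneg.
Qed.

Lemma sumZ_boundary_point (b : zbar) (y : Z) :
  summableZ (fun z => if boundary_point b z then g (z - y) else 0) /\
  sumZ (fun z => if boundary_point b z then g (z - y) else 0) = boundary_weight b y.
Proof.
  destruct b as [|x|]; simpl.
  - split; [exact summableZ_zero | exact sumZ_zero].
  - split; [apply summableZ_point | apply (sumZ_point _ (fun z => g (z - y)))].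
  - split; [exact summableZ_zero | exact sumZ_zero].
Qed.

Lemma interval_mass_succ_sub (lo hi : zbar) (y : Z) : zlt lo hi ->
  interval_mass lo hi (y + 1) - interval_mass lo hi y = boundary_weight lo y - boundary_weight hi y.
Proof.
  intros Hlt. unfold interval_mass.
  destruct (sumZ_shift 1 _ (summableZ_interval_mass lo hi (y + 1))) as [Hs Es].
  destruct (sumZ_boundary_point lo y) as [Hlo Elo], (sumZ_boundary_point hi y) as [Hhi Ehi].
  rewrite <- Es, <- sumZ_minus, <- Elo, <- Ehi, <- sumZ_minus
    by (assumption || apply summableZ_interval_mass).
  apply sumZ_ext. intros z. replace (z + 1 - (y + 1))%Z with (z - y)%Z by lia.
  now apply inI_succ_sub.
Qed.

Lemma interval_mass_lt (lo hi : zbar) (y1 y2 : Z) : zlt lo hi -> (y1 < y2)%Z ->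
  (forall w, (y1 <= w < y2)%Z -> boundary_weight hi w < boundary_weight lo w) ->
  interval_mass lo hi y1 < interval_mass lo hi y2.
Proof.
  intros Hlt H12 Hw. apply lt_of_succ_lt; [exact H12|].
  intros w Hw12. pose proof (interval_mass_succ_sub lo hi w Hlt). pose proof (Hw w Hw12). lra.
Qed.

Lemma interval_mass_gt (lo hi : zbar) (y1 y2 : Z) : zlt lo hi -> (y1 < y2)%Z ->
  (forall w, (y1 <= w < y2)%Z -> boundary_weight lo w < boundary_weight hi w) ->
  interval_mass lo hi y2 < interval_mass lo hi y1.
Proof.
  intros Hlt H12 Hw. apply Ropp_lt_cancel.
  apply (lt_of_succ_lt (fun y => - interval_mass lo hi y)); [exact H12|].
  intros w Hw12. pose proof (interval_mass_succ_sub lo hi w Hlt). pose proof (Hw w Hw12). lra.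
Qed.

Hypothesis g_symmetric : forall z, g (- z) = g z.

Lemma interval_mass_reflect (x y z : Z) :
  interval_mass (ZFin x) (ZFin y) z = interval_mass (ZFin x) (ZFin y) (x + y - 1 - z).
Proof.
  unfold interval_mass.
  rewrite <- (proj2 (sumZ_reflect (x + y - 1) _ (summableZ_interval_mass (ZFin x) (ZFin y) (x + y - 1 - z)))).
  apply sumZ_ext. intros w. unfold inI.
  destruct (Z.leb_spec x w), (Z.ltb_spec w y), (Z.leb_spec x (x + y - 1 - w)),
    (Z.ltb_spec (x + y - 1 - w) y); simpl; try lia; try reflexivity.
  rewrite <- g_symmetric. f_equal. lia.
Qed.

Hypothesis g_decreasing : forall u v, (Z.abs u < Z.abs v)%Z -> g v < g u.

Lemma g_pos (z : Z) : 0 < g z.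
Proof.
  apply Rle_lt_trans with (g (Z.abs z + 1)); [apply g_nonneg | apply g_decreasing; lia].
Qed.

Lemma interval_mass_lt_below_m_low (a : nat -> zbar) (n : nat) (y1 y2 : Z) :
  zlt (a n) (a (S n)) -> (y1 < y2)%Z -> zle (ZFin y2) (m_low a n) ->
  interval_mass (a n) (a (S n)) y1 < interval_mass (a n) (a (S n)) y2.
Proof.
  intros Hlt H12 Hle. apply interval_mass_lt; [exact Hlt | exact H12|].
  intros w Hw. unfold m_low in Hle.
  destruct (a n) as [|x|], (a (S n)) as [|y|]; simpl in Hlt |- *; try contradiction;
    try (destruct Hle as [[]|Hle]; discriminate).
  - apply zle_ZFin, double_le_of_le_div2 in Hle. apply g_decreasing. lia.
  - apply g_pos.
Qed.

Lemma interval_mass_gt_above_m_up (a : nat -> zbar) (n : nat) (y1 y2 : Z) :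
  zlt (a n) (a (S n)) -> ~ (a n = ZNinf /\ a (S n) = ZPinf) ->
  (y1 < y2)%Z -> zle (m_up a n) (ZFin y1) ->
  interval_mass (a n) (a (S n)) y2 < interval_mass (a n) (a (S n)) y1.
Proof.
  intros Hlt Hcell H12 Hle. apply interval_mass_gt; [exact Hlt | exact H12|].
  intros w Hw. unfold m_up in Hle.
  destruct (a n) as [|x|], (a (S n)) as [|y|]; simpl in Hlt |- *; try contradiction;
    try (destruct Hle as [[]|Hle]; discriminate).
  - apply g_pos.
  - tauto.
  - apply zle_ZFin, le_double_succ_of_div2_le in Hle. apply g_decreasing. lia.
Qed.

End IntervalMass.

Lemma cell_not_whole_line (N : nat) (a : nat -> zbar) (n : nat) : (2 <= N)%nat ->
  (forall k, (1 <= k <= N)%nat -> zlt (a k) (a (S k))) -> (1 <= n <= N)%nat ->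
  ~ (a n = ZNinf /\ a (S n) = ZPinf).
Proof.
  intros HN Hincr Hn [Hlo Hhi]. destruct (Nat.eq_dec n 1) as [->|Hn1].
  - specialize (Hincr 2%nat ltac:(lia)). rewrite Hhi in Hincr. exact Hincr.
  - specialize (Hincr (n - 1)%nat ltac:(lia)). replace (S (n - 1)) with n in Hincr by lia.
    rewrite Hlo in Hincr. now destruct (a (n - 1)%nat).
Qed.

Lemma div2_reflect (c : Z) : Z.odd (c - 1) = true -> (c / 2 = c - 1 - (c - 2) / 2)%Z.
Proof.
  intros Hodd. apply Z.odd_spec in Hodd. destruct Hodd as [k Hk].
  replace c with ((k + 1) * 2)%Z by lia.
  replace ((k + 1) * 2 - 2)%Z with (k * 2)%Z by lia. rewrite !Z.div_mul by lia. lia.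
Qed.

Theorem lemma5p2 (beta : R) (N : nat) (a : nat -> zbar)
  (Hbeta : 0 < beta)
  (HN : (2 <= N)%nat)
  (Ha1 : a 1%nat = ZNinf)
  (HaN : a (S N) = ZPinf)
  (Hincr : forall n, (1 <= n <= N)%nat -> zlt (a n) (a (S n)))
  (Hmid : forall n x y, (1 <= n <= N)%nat -> a n = ZFin x -> a (S n) = ZFin y ->
          Z.odd (x + y - 1) = true) :
  forall n, (1 <= n <= N)%nat ->
    (forall x y, a n = ZFin x -> a (S n) = ZFin y ->
       (forall (z : Z) (t : R), 0 <= t <= 1 ->
          h beta a n z t = h beta a n (x + y - 1 - z)%Z t) /\
       (forall t : R, 0 <= t <= 1 ->
          h beta a n ((x + y) / 2)%Z t = h beta a n ((x + y - 2) / 2)%Z t)) /\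
    (forall t : R, 0 <= t < 1 ->
       (forall y1 y2 : Z, (y1 < y2)%Z -> zle (ZFin y2) (m_low a n) ->
          h beta a n y1 t < h beta a n y2 t) /\
       (forall y1 y2 : Z, (y1 < y2)%Z -> zle (m_up a n) (ZFin y1) ->
          h beta a n y2 t < h beta a n y1 t)).
Proof.
  intros n Hn.
  assert (Hrate : forall t, 0 <= t <= 1 -> 0 <= beta * (1 - t)) by (intros; nra).
  split.
  - intros x y Hx Hy.
    assert (Hrefl : forall z t, 0 <= t <= 1 -> h beta a n z t = h beta a n (x + y - 1 - z)%Z t).
    { intros z t Ht. unfold h. rewrite Hx, Hy.
      apply (interval_mass_reflect (skellam beta (1 - t))).
      - now apply summableZ_skellam, Hrate.
      - intros w. now apply skellam_nonneg, Hrate.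
      - apply skellam_opp. }
    split; [exact Hrefl|].
    intros t Ht. rewrite (div2_reflect (x + y) (Hmid n x y Hn Hx Hy)).
    replace (x + y - 2)%Z with (x + y - 1 - 1)%Z by lia. symmetry. apply Hrefl. exact Ht.
  - intros t Ht.
    assert (Hpos : 0 < beta * (1 - t)) by nra.
    pose proof (summableZ_skellam beta (1 - t) (Hrate t ltac:(lra))) as Hsum.
    pose proof (fun z => skellam_nonneg beta (1 - t) z (Hrate t ltac:(lra))) as Hnn.
    pose proof (fun u v => skellam_lt_of_abs_lt beta (1 - t) u v Hpos) as Hdec.
    split; intros y1 y2 H12 Hm.
    + exact (interval_mass_lt_below_m_low _ Hsum Hnn Hdec a n y1 y2 (Hincr n Hn) H12 Hm).
    + exact (interval_mass_gt_above_m_up _ Hsum Hnn Hdec a n y1 y2 (Hincr n Hn)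
               (cell_not_whole_line N a n HN Hincr Hn) H12 Hm).
Qed.
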